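(* Let $\Bbbk$ be a field. If $G$ is a graph with no induced $2K_2$ that is prime over $\Bbbk$, then $\operatorname{reg}_{\Bbbk}(G)\le\frac{\delta(G)+3}{2}$, where $\delta(G)$ is the minimum degree.
   Context: $2K_2$ is the disjoint union of two edges. $\operatorname{reg}_{\Bbbk}(G)=\max\{j\ge0:\widetilde H_{j-1}(\operatorname{Ind}(G[S]);\Bbbk)\neq0\text{ for some }S\subseteq V(G)\}$, $\operatorname{Ind}$ the independence complex. A connected graph $G$ is prime over $\Bbbk$ if $\operatorname{reg}_{\Bbbk}(G-x)<\operatorname{reg}_{\Bbbk}(G)$ for every vertex $x$. *)

(* Finite simple graphs on vertex set 'I_n, given by an
   adjacency relation e (assumed symmetric and irreflexive in the theorem). *)
From HB Require Import structures.
From mathcomp Require Import all_boot all_order all_algebra.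
Set Implicit Arguments. Unset Strict Implicit. Unset Printing Implicit Defensive.
Import GRing.Theory.

Definition indep (n : nat) (e : rel 'I_n) (F : {set 'I_n}) : bool :=
  [forall u in F, forall v in F, ~~ e u v].

(* (j-1)-dimensional faces (= faces with j vertices) of Ind(G[S]) *)
Definition faces (n : nat) (e : rel 'I_n) (S : {set 'I_n}) (j : nat)
  : {set {set 'I_n}} :=
  [set F : {set 'I_n} | [&& F \subset S, indep e F & #|F| == j]].

(* Simplicial boundary map C_{j-1} -> C_{j-2} of the augmented chain complex
   of Ind(G[S]) over K, as a matrix acting on row vectors (rows indexed by
   faces with j vertices, columns by faces with j-1 vertices).  For j = 0 this is the zero map
   from C_{-1} = K (the empty face) to 0. *)
Definition bdry (K : fieldType) (n : nat) (e : rel 'I_n) (S : {set 'I_n})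
  (j : nat) : 'M[K]_(#|faces e S j|, #|faces e S j.-1|) :=
  \matrix_(a < #|faces e S j|, b < #|faces e S j.-1|)
    (let F : {set 'I_n} := enum_val a in let F' : {set 'I_n} := enum_val b in
     if F' \subset F then
       (\sum_(v in F :\: F') (-1) ^+ #|[set u in F | (u < v)%N]|)%R
     else 0%R).

(* reduced homology  H~_{j-1}(Ind(G[S]); K) = ker d_j / im d_{j+1}  is nonzero *)
Definition red_homology_nonzero (K : fieldType) (n : nat) (e : rel 'I_n)
  (S : {set 'I_n}) (j : nat) : bool :=
  ~~ (kermx (bdry K e S j) <= bdry K e S j.+1)%MS.

(* regularity of the induced subgraph G[W]:
   max { j : H~_{j-1}(Ind(G[S]);K) <> 0 for some S subset of W }.
   (No j > n can occur since then there are no faces with j vertices.) *)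
Definition reg_on (K : fieldType) (n : nat) (e : rel 'I_n) (W : {set 'I_n})
  : nat :=
  \max_(j < n.+2 | [exists S : {set 'I_n},
                      (S \subset W) && red_homology_nonzero K e S j]) j.

Definition reg (K : fieldType) (n : nat) (e : rel 'I_n) : nat :=
  reg_on K e [set: 'I_n].

Definition connected_graph (n : nat) (e : rel 'I_n) : Prop :=
  forall x y : 'I_n, connect e x y.

Definition prime_graph (K : fieldType) (n : nat) (e : rel 'I_n) : Prop :=
  connected_graph e /\ forall x : 'I_n, (reg_on K e [set~ x] < reg K e)%N.

Definition twoK2_free (n : nat) (e : rel 'I_n) : Prop :=
  forall a b c d : 'I_n, e a b -> e c d ->
    [|| e a c, e a d, e b c | e b d].

Definition degree (n : nat) (e : rel 'I_n) (v : 'I_n) : nat :=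
  #|[set u | e v u]|.

(* minimum degree (for n = 0 this is n = 0) *)
Definition min_degree (n : nat) (e : rel 'I_n) : nat :=
  \big[minn/n]_(v : 'I_n) degree e v.

(* Fix a vertex x.  A prime graph has no isolated vertex (deleting a
   cone point does not lower the regularity), so x has a neighbour y.  The
   deletion/link inequality  reg G <= max (reg (G - y), reg (G - N[y]) + 1)
   and primality give  reg G <= reg (G - N[y]) + 1.  In G - N[y] the vertices
   outside N(x) are pairwise non-adjacent, since an edge between two of them
   would form an induced 2K2 with xy.  For a 2K2-free graph whose vertices off
   a set T are independent, deleting an endpoint of an edge inside T and
   inducting gives  2 reg <= |T| + 1; the remaining case is a bipartite
   2K2-free graph, whose neighbourhoods are nested, so its regularity is at
   most 1.  As y lies in N(x) but not in G - N[y], 2 reg G <= deg x + 2. *)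

From HB Require Import structures.
From mathcomp Require Import all_boot all_order all_algebra.
From mathcomp Require Import ring zify.
Set Implicit Arguments. Unset Strict Implicit. Unset Printing Implicit Defensive.
Import GRing.Theory.
Local Open Scope ring_scope.

Section Chains.
Variables (K : fieldType) (n : nat).
Implicit Types (F G : {set 'I_n}) (a v : 'I_n) (c u : {set 'I_n} -> K).

Definition face_sign F v : K := (-1) ^+ #|[set x in F | (x < v)%N]|.

Lemma face_signU1 a v G : v \notin G ->
  face_sign (v |: G) a = (-1) ^+ (v < a)%N * face_sign G a.
Proof.
move=> vG; rewrite /face_sign -exprD; congr (_ ^+ _).
case: ltnP => [va | av].
  have -> : [set x in v |: G | (x < a)%N] = v |: [set x in G | (x < a)%N].
    by apply/setP => x; rewrite !inE; case: eqVneq => [->|]; rewrite ?va ?orbT.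
  by rewrite cardsU1 inE (negbTE vG).
rewrite add0n; apply: eq_card => x; rewrite !inE; case: eqVneq => [->|] //=.
by rewrite ltnNge av andbF.
Qed.

Lemma face_sign_sqr F v : face_sign F v * face_sign F v = 1.
Proof. by rewrite /face_sign -exprD addnn -mul2n exprM sqrrN !expr1n. Qed.

Lemma face_sign_pair a v G : a \notin G -> v \notin G -> a != v ->
  face_sign (v |: (a |: G)) a * face_sign (v |: (a |: G)) v =
  - (face_sign (a |: G) a * face_sign (v |: G) v).
Proof.
move=> aG vG av; have vaG : v \notin a |: G by rewrite !inE negb_or eq_sym av.
rewrite !face_signU1 // !ltnn !mul1r.
have : ((v < a)%N + (a < v)%N = 1)%N.
  by case: ltngtP => // /val_inj eva; rewrite eva eqxx in av.
by case: (v < a)%N; case: (a < v)%N => // _; rewrite ?expr0 ?expr1; ring.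
Qed.

Definition boundary c F : K :=
  \sum_(v | v \notin F) c (v |: F) * face_sign (v |: F) v.

Lemma eq_boundary c c' : c =1 c' -> boundary c =1 boundary c'.
Proof. by move=> eqc G; apply: eq_bigr => v _; rewrite eqc. Qed.

Lemma boundaryD c c' G :
  boundary (fun F => c F + c' F) G = boundary c G + boundary c' G.
Proof. by rewrite /boundary -big_split; apply: eq_bigr => v _; rewrite mulrDl. Qed.

Lemma boundaryB c c' G :
  boundary (fun F => c F - c' F) G = boundary c G - boundary c' G.
Proof. by rewrite /boundary -sumrB; apply: eq_bigr => v _; rewrite mulrBl. Qed.

Lemma boundary_eq0 a c G : (forall F, a \in F -> c F = 0) -> a \in G ->
  boundary c G = 0.
Proof.
by move=> c0 aG; rewrite /boundary big1 // => v _; rewrite c0 ?mul0r // !inE aG orbT.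
Qed.

(* [cone a u] is the join of the vertex [a] with [u]; [chain_decomp] splits a
   chain into its part avoiding [a] and the cone over its link at [a]. *)
Definition cone a u F : K := if a \in F then face_sign F a * u (F :\ a) else 0.
Definition del a c F : K := if a \in F then 0 else c F.
Definition link a c F : K :=
  if a \in F then 0 else face_sign (a |: F) a * c (a |: F).

Lemma chain_decomp a c F : c F = del a c F + cone a (link a c) F.
Proof.
rewrite /del /cone /link; case: ifP => aF; last by rewrite addr0.
by rewrite add0r !inE eqxx /= setD1K // mulrA face_sign_sqr mul1r.
Qed.

Lemma boundary_cone a u : (forall F, a \in F -> u F = 0) ->
  forall G, boundary (cone a u) G = u G - cone a (boundary u) G.
Proof.
move=> u0 G; rewrite /cone; case: (boolP (a \in G)) => [aG | aG]; last first.
  rewrite subr0 /boundary (bigD1 a) //= big1 ?addr0.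
    by rewrite setU11 setU1K // mulrAC face_sign_sqr mul1r.
  by move=> v /andP [vG va]; rewrite !inE eq_sym (negbTE va) (negbTE aG) mul0r.
rewrite u0 // sub0r -(setD1K aG); set G0 := G :\ a.
have aG0 : a \notin G0 by rewrite !inE eqxx.
rewrite setU1K // /boundary [in RHS](bigD1 a) /=; last by rewrite !inE eqxx.
rewrite u0 ?setU11 // mul0r add0r mulr_sumr -sumrN.
have eq_range v : (v \notin G0) && (v != a) = (v \notin a |: G0).
  by rewrite !inE negb_or andbC.
rewrite (eq_bigl _ _ eq_range); apply: eq_bigr => v vG.
have [va vG0] : v != a /\ v \notin G0 by move: vG; rewrite !inE negb_or => /andP [].
have -> : (v |: (a |: G0)) :\ a = v |: G0.
  by rewrite setUCA setU1K // in_setU1 negb_or eq_sym va.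
rewrite in_setU1 setU11 orbT mulrAC face_sign_pair 1?(eq_sym a) //; ring.
Qed.

Lemma boundary_decomp a c G : boundary c G =
  boundary (del a c) G + link a c G - cone a (boundary (link a c)) G.
Proof.
rewrite (eq_boundary (chain_decomp a c)) boundaryD boundary_cone ?addrA //.
by move=> F aF; rewrite /link aF.
Qed.

Lemma boundary_link a c :
  boundary c =1 (fun _ => 0) -> boundary (link a c) =1 (fun _ => 0).
Proof.
move=> bc0 G; case: (boolP (a \in G)) => aG.
  by apply: (boundary_eq0 _ aG) => F aF; rewrite /link aF.
(* at [a |: G] only the cone term survives, with a nonzero sign *)
have := boundary_decomp a c (a |: G); rewrite bc0.
rewrite (boundary_eq0 (a := a)) ?setU11 //; last by move=> F aF; rewrite /del aF.
rewrite /link /cone setU11 setU1K // add0r sub0r => /eqP; rewrite eq_sym oppr_eq0.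
rewrite mulf_eq0 => /orP [/eqP s0 | /eqP //].
by have := face_sign_sqr (a |: G) a; rewrite s0 mul0r => /eqP; rewrite eq_sym oner_eq0.
Qed.

Lemma boundary_del a c : boundary c =1 (fun _ => 0) ->
  forall G, boundary (del a c) G = - link a c G.
Proof.
move=> bc0 G; apply/eqP; rewrite -addr_eq0; apply/eqP.
have := boundary_decomp a c G; rewrite bc0 /cone boundary_link // mulr0 if_same subr0.
by move->.
Qed.

End Chains.

Section IndependenceComplex.
Variables (K : fieldType) (n : nat) (e : rel 'I_n).
Hypotheses (e_sym : symmetric e) (e_irr : irreflexive e).
Implicit Types (S W T F : {set 'I_n}) (a x : 'I_n).

Definition nbhd a : {set 'I_n} := [set v | e a v].

Lemma indepP F : reflect {in F &, forall u v, ~~ e u v} (indep e F).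
Proof.
apply: (iffP idP) => [/forall_inP h u v uF vF | h].
  by have /forall_inP := h u uF; apply.
by apply/forall_inP => u uF; apply/forall_inP => v vF; apply: h.
Qed.

Lemma indepS F F' : F \subset F' -> indep e F' -> indep e F.
Proof.
by move=> /subsetP sFF' /indepP h; apply/indepP => u v /sFF' uF /sFF'; apply: h.
Qed.

Lemma indepU1 a F : indep e F -> {in F, forall x, ~~ e a x} -> indep e (a |: F).
Proof.
move=> /indepP h ha; apply/indepP => u v /setU1P [-> | uF] /setU1P [-> | vF].
- by rewrite e_irr.
- exact: ha.
- by rewrite e_sym ha.
- exact: h.
Qed.

Lemma facesS S S' j : S \subset S' -> faces e S j \subset faces e S' j.
Proof.
move=> sSS'; apply/subsetP => F; rewrite !inE => /and3P [sFS -> ->].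
by rewrite (subset_trans sFS sSS').
Qed.

Lemma facesU1 S F a j : a \in S -> F \in faces e S j -> a \notin F ->
  {in F, forall x, ~~ e a x} -> a |: F \in faces e S j.+1.
Proof.
move=> aS + aF ha; rewrite !inE => /and3P [sFS indF /eqP <-].
by rewrite subUset sub1set aS sFS indepU1 // cardsU1 aF add1n eqxx.
Qed.

Lemma faces_link S F a j : a \notin F -> a |: F \in faces e S j.+1 ->
  F \in faces e (S :\: (a |: nbhd a)) j.
Proof.
move=> aF; rewrite !inE cardsU1 aF add1n eqSS => /and3P [sFS indF ->].
rewrite (indepS (subsetUr _ F) indF) !andbT; apply/subsetP => x xF.
have xS : x \in S by apply: (subsetP sFS); rewrite !inE xF orbT.
rewrite !inE xS andbT negb_or; apply/andP; split; first by apply: contraNneq aF => <-.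
by move/indepP: indF; apply; rewrite !inE ?eqxx ?xF ?orbT.
Qed.

Implicit Types (c u : {set 'I_n} -> K) (A B : {set {set 'I_n}}).

Definition supported_on A c := forall F, F \notin A -> c F = 0.

Lemma supported_onS A B c : A \subset B -> supported_on A c -> supported_on B c.
Proof. by move=> sAB sc F FB; apply: sc; apply: contra FB; apply: (subsetP sAB). Qed.

Lemma supported_onD A c c' : supported_on A c -> supported_on A c' ->
  supported_on A (fun F => c F + c' F).
Proof. by move=> sc sc' F FA; rewrite sc // sc' // addr0. Qed.

Lemma supported_onB A c c' : supported_on A c -> supported_on A c' ->
  supported_on A (fun F => c F - c' F).
Proof. by move=> sc sc' F FA; rewrite sc // sc' // subr0. Qed.

Lemma supported_on_boundary S j c : supported_on (faces e S j) c ->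
  supported_on (faces e S j.-1) (boundary c).
Proof.
move=> sc F FS; rewrite /boundary big1 // => v vF; rewrite sc ?mul0r //.
apply: contra FS; rewrite !inE cardsU1 vF add1n => /and3P [sFS indF /eqP <-] /=.
rewrite eqxx andbT (indepS (subsetUr _ _) indF) andbT.
exact: subset_trans (subsetUr _ _) sFS.
Qed.

Lemma supported_on_del S j a c : supported_on (faces e S j) c ->
  supported_on (faces e (S :\ a) j) (del a c).
Proof.
move=> sc F FS; rewrite /del; case: ifP => // aF; apply: sc; apply: contra FS.
by rewrite !inE subsetD1 aF => /and3P [-> -> ->].
Qed.

Lemma supported_on_link S j a c : supported_on (faces e S j.+1) c ->
  supported_on (faces e (S :\: (a |: nbhd a)) j) (link a c).
Proof.
move=> sc F FS; rewrite /link; case: ifP => // aF.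
by rewrite sc ?mulr0 //; apply: contra FS; apply: faces_link; rewrite aF.
Qed.

Lemma supported_on_cone S S' j a u : a \in S -> S' \subset S ->
  {in S', forall x, ~~ e a x} -> supported_on (faces e S' j) u ->
  supported_on (faces e S j.+1) (cone a u).
Proof.
move=> aS sS'S ha su F FS; rewrite /cone; case: ifP => // aF.
rewrite su ?mulr0 //; apply: contra FS => FS'.
rewrite -(setD1K aF) facesU1 ?setD11 //; first exact: subsetP (facesS j sS'S) _ FS'.
by move=> x; move: FS'; rewrite inE => /and3P [/subsetP sF _ _] /sF /ha.
Qed.

Lemma supported_on_eq0 S j a u : a \notin S -> supported_on (faces e S j) u ->
  forall F, a \in F -> u F = 0.
Proof.
move=> aS su F aF; apply: su; rewrite inE negb_and; apply/orP; left.
by apply: contra aS => /subsetP; apply.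
Qed.

(* [exact_at S j]: the reduced homology H~_{j-1}(Ind(G[S])) vanishes, stated
   for chains given as functions on all vertex sets. *)
Definition exact_at S j := forall c, supported_on (faces e S j) c ->
  boundary c =1 (fun _ => 0) ->
  exists2 b, supported_on (faces e S j.+1) b & boundary b =1 c.

Lemma exact_at_no_faces S j : faces e S j = set0 -> exact_at S j.
Proof.
move=> S0 c sc _; exists (fun _ => 0) => [F _ | F] //.
by rewrite /boundary big1 ?sc ?S0 ?inE // => v _; rewrite mul0r.
Qed.

(* Mayer-Vietoris for Ind(G[S]) = Ind(G[S - a]) \cup a * Ind(G[S - N[a]]). *)
Lemma exact_at_del_link S a j : a \in S ->
  exact_at (S :\ a) j.+1 -> exact_at (S :\: (a |: nbhd a)) j -> exact_at S j.+1.
Proof.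
move=> aS ex_del ex_link c sc bc0.
have [u su bu] := ex_link _ (supported_on_link (a := a) sc) (boundary_link a bc0).
have sub_link : S :\: (a |: nbhd a) \subset S :\ a.
  by apply: setDS; rewrite sub1set setU11.
pose c' F := del a c F + u F.
have sc' : supported_on (faces e (S :\ a) j.+1) c'.
  apply: supported_onD (supported_on_del (a := a) sc) _.
  exact: supported_onS (facesS _ sub_link) su.
have bc' : boundary c' =1 (fun _ => 0).
  by move=> G; rewrite boundaryD boundary_del // bu addNr.
have [v sv bv] := ex_del c' sc' bc'.
exists (fun F => v F - cone a u F).
  apply: supported_onB (supported_onS (facesS _ (subD1set S a)) sv) _.
  apply: supported_on_cone aS (subsetDl _ _) _ su => x.
  by rewrite !inE negb_or => /andP [/andP [_ ->]].
move=> G; rewrite boundaryB boundary_cone; last first.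
  by apply: (supported_on_eq0 _ su); rewrite !inE eqxx.
rewrite bv /c' [RHS](chain_decomp a c) /cone; case: ifP => _; rewrite ?bu; ring.
Qed.

Lemma exact_at_cone S a j : a \in S -> {in S, forall x, ~~ e a x} -> exact_at S j.
Proof.
move=> aS ha c sc bc0; exists (cone a (del a c)).
  apply: supported_on_cone aS (subxx S) ha _.
  exact: supported_onS (facesS _ (subD1set S a)) (supported_on_del (a := a) sc).
move=> G; rewrite boundary_cone => [|F aF]; last by rewrite /del aF.
rewrite [RHS](chain_decomp a c) /cone; case: ifP => _; last by rewrite subr0 addr0.
by rewrite boundary_del // mulrN opprK.
Qed.

Definition chain_of_row A (r : 'rV[K]_#|A|) F : K :=
  \sum_(i < #|A| | enum_val i == F) r 0 i.

Definition row_of_chain A c : 'rV[K]_#|A| := \row_(i < #|A|) c (enum_val i).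

Lemma chain_of_rowE A (r : 'rV[K]_#|A|) i : chain_of_row r (enum_val i) = r 0 i.
Proof.
by rewrite /chain_of_row (eq_bigl _ _ (fun k => inj_eq enum_val_inj k i)) big_pred1_eq.
Qed.

Lemma supported_on_chain_of_row A (r : 'rV[K]_#|A|) : supported_on A (chain_of_row r).
Proof.
move=> F FA; rewrite /chain_of_row big_pred0 // => i.
by apply: contraNF FA => /eqP <-; apply: enum_valP.
Qed.

Lemma row_of_chainK A (r : 'rV[K]_#|A|) : row_of_chain A (chain_of_row r) = r.
Proof. by apply/rowP => i; rewrite mxE chain_of_rowE. Qed.

(* In the column of [F'], [bdry] is nonzero only in the rows [v |: F'] with
   [v \notin F']. *)
Lemma row_of_chain_bdry S k c : supported_on (faces e S k) c -> forall i,
  (row_of_chain _ c *m bdry K e S k) 0 i = boundary c (enum_val i).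
Proof.
move=> sc i; rewrite mxE; under eq_bigr => a _ do rewrite !mxE /=.
set F' := enum_val i; have : F' \in faces e S k.-1 by apply: enum_valP.
rewrite inE => /and3P [_ _ /eqP cardF'].
pose g F := c F * (if F' \subset F then \sum_(v in F :\: F') face_sign K F v else 0).
rewrite -(big_enum_val (A := fun F => F \in faces e S k) g) /=.
have -> : \sum_(F in faces e S k) g F = \sum_F g F.
  rewrite [RHS](bigID (fun F => F \in faces e S k)) /= [X in _ = _ + X]big1 ?addr0 //.
  by move=> F FS; rewrite /g sc ?mul0r.
have -> : \sum_F g F = \sum_(F : {set 'I_n}) \sum_(v : 'I_n)
    (if (F' \subset F) && (v \in F :\: F') then c F * face_sign K F v else 0).
  apply: eq_bigr => F _; rewrite /g; case: ifP => sF /=.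
    by rewrite mulr_sumr big_mkcond.
  by rewrite mulr0 big1.
rewrite exchange_big /= /boundary [RHS]big_mkcond /=; apply: eq_bigr => v _.
case: (boolP (v \in F')) => vF' /=; first by apply: big1 => F _; rewrite !inE vF' andbF.
rewrite (bigD1 (v |: F')) //= subsetUr !inE eqxx vF' /= big1 ?addr0 // => F nF.
case: ifP => // /andP [sF]; rewrite !inE => /andP [_ vF].
rewrite sc ?mul0r //; apply: contra nF; rewrite inE => /and3P [_ _ /eqP cardF].
by rewrite eq_sym eqEcard subUset sub1set vF sF cardsU1 vF' cardF add1n cardF' leqSpred.
Qed.

Lemma boundary_chain_of_row S k (r : 'rV[K]_#|faces e S k|) i :
  boundary (chain_of_row r) (enum_val i) = (r *m bdry K e S k) 0 i.
Proof.
have := row_of_chain_bdry (supported_on_chain_of_row r) i.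
by rewrite row_of_chainK => ->.
Qed.

Lemma exact_atP S j :
  reflect (exact_at S j) (kermx (bdry K e S j) <= bdry K e S j.+1)%MS.
Proof.
apply: (iffP idP) => [ker_sub c sc bc0 | ex].
  have : (row_of_chain _ c <= kermx (bdry K e S j))%MS.
    by rewrite sub_kermx; apply/eqP/rowP => i; rewrite row_of_chain_bdry // bc0 mxE.
  move=> /submx_trans /(_ ker_sub) /submxP [r rE].
  exists (chain_of_row r); first exact: supported_on_chain_of_row.
  move=> F; have [FS | FS] := boolP (F \in faces e S j); last first.
    by rewrite sc // (supported_on_boundary (supported_on_chain_of_row r)).
  by rewrite -(enum_rankK_in FS FS) (boundary_chain_of_row (k := j.+1)) -rE mxE.
apply/row_subP => i; set r := row i _.
have r0 : r *m bdry K e S j = 0 by apply/eqP; rewrite -sub_kermx row_sub.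
have bc0 : boundary (chain_of_row r) =1 (fun _ => 0).
  move=> F; have [FS | FS] := boolP (F \in faces e S j.-1).
    by rewrite -(enum_rankK_in FS FS) boundary_chain_of_row r0 mxE.
  exact: supported_on_boundary (supported_on_chain_of_row r) _ FS.
have [b sb bb] := ex _ (supported_on_chain_of_row r) bc0.
suff -> : r = row_of_chain _ b *m bdry K e S j.+1 by apply: submxMl.
by apply/rowP => k; rewrite (row_of_chain_bdry sb k) bb chain_of_rowE.
Qed.

End IndependenceComplex.

Local Close Scope ring_scope.

Section Regularity.
Variables (K : fieldType) (n : nat) (e : rel 'I_n).
Hypotheses (e_sym : symmetric e) (e_irr : irreflexive e).
Implicit Types (S W T : {set 'I_n}) (a t x : 'I_n).

Lemma faces_eq0 S j : n < j -> faces e S j = set0.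
Proof.
move=> nj; apply/setP => F; rewrite inE in_set0; apply/and3P => -[_ _ /eqP cardF].
by have := max_card F; rewrite card_ord cardF leqNgt nj.
Qed.

Lemma reg_on_leP W m :
  reg_on K e W <= m <-> forall S j, S \subset W -> m < j -> exact_at K e S j.
Proof.
split=> [/bigmax_leqP reg_le S j sSW mj | ex].
  have [jn | nj] := ltnP j n.+2; last exact/exact_at_no_faces/faces_eq0/ltnW.
  suff : ~~ red_homology_nonzero K e S j by move/negPn/exact_atP.
  apply: contraL mj => hS; rewrite -leqNgt; apply: (reg_le (Ordinal jn)).
  by apply/existsP; exists S; rewrite sSW.
apply/bigmax_leqP => j /existsP [S /andP [sSW]]; apply: contraLR.
by rewrite -ltnNge negbK => mj; apply/exact_atP/ex.
Qed.

Lemma exact_at_reg_on W S j : S \subset W -> reg_on K e W < j -> exact_at K e S j.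
Proof. by move=> sSW; apply: (proj1 (reg_on_leP W _) (leqnn _)). Qed.

Lemma reg_on_del_link W a :
  reg_on K e W <= maxn (reg_on K e (W :\ a)) (reg_on K e (W :\: (a |: nbhd e a))).+1.
Proof.
apply/reg_on_leP => S j sSW; rewrite gtn_max => /andP [del_lt link_lt].
have [aS | aS] := boolP (a \in S); last first.
  by apply: exact_at_reg_on del_lt; rewrite subsetD1 sSW aS.
case: j del_lt link_lt => // j del_lt link_lt.
apply: (exact_at_del_link e_sym e_irr aS).
  exact: exact_at_reg_on (setSD _ sSW) del_lt.
exact: exact_at_reg_on (setSD _ sSW) link_lt.
Qed.

Lemma reg_on_isolated W a :
  {in W, forall x, ~~ e a x} -> reg_on K e W <= reg_on K e (W :\ a).
Proof.
move=> ha; apply/reg_on_leP => S j sSW lt.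
have [aS | aS] := boolP (a \in S).
  by apply: (exact_at_cone e_sym e_irr aS) => x /(subsetP sSW); apply: ha.
by apply: exact_at_reg_on lt; rewrite subsetD1 sSW aS.
Qed.

Lemma reg_on_indep W : indep e W -> reg_on K e W = 0.
Proof.
move=> /indepP indW; apply/eqP; rewrite -leqn0; apply/reg_on_leP => S j sSW j_gt0.
have [-> | [a aS]] := set_0Vmem S.
  apply: exact_at_no_faces; apply/setP => F; rewrite !inE subset0.
  by apply/and3P => -[/eqP -> _ /eqP j0]; rewrite -j0 cards0 in j_gt0.
by apply: (exact_at_cone e_sym e_irr aS) => x xS; apply: indW; apply: (subsetP sSW).
Qed.

Lemma reg_on_disjoint W T :
  indep e (W :\: T) -> W :&: T = set0 -> reg_on K e W = 0.
Proof.
move=> indWT' WT0; apply: reg_on_indep; suff <- : W :\: T = W by [].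
by apply/setDidPl; rewrite -setI_eq0 WT0.
Qed.

Section TwoK2Free.
Hypothesis hfree : twoK2_free e.

Lemma indep_nonnbhd_edge x y :
  e x y -> indep e ([set: 'I_n] :\: (y |: nbhd e y) :\: nbhd e x).
Proof.
move=> exy; apply/indepP => u v; rewrite !inE !negb_or.
move=> /andP [nxu /andP [/andP [_ nyu] _]] /andP [nxv /andP [/andP [_ nyv] _]].
apply/negP => euv; have := hfree exy euv.
by rewrite (negbTE nxu) (negbTE nxv) (negbTE nyu) (negbTE nyv).
Qed.

(* In a 2K2-free bipartite graph the neighbourhoods of one side are nested, so
   a vertex of maximum degree on that side dominates every edge. *)
Lemma indep_compl_max_nbhd W T t :
  indep e (W :&: T) -> indep e (W :\: T) -> t \in W :&: T ->
  {in W :&: T, forall u, #|nbhd e u :&: W| <= #|nbhd e t :&: W|} ->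
  indep e (W :\: (t |: nbhd e t)).
Proof.
move=> /indepP indWT /indepP indWT' tWT tmax.
have cross u v : u \in W :&: T -> v \in W :\: T -> ~~ e t u -> ~~ e t v -> ~~ e u v.
  move=> uWT vWT' ntu ntv; apply/negP => euv.
  have [vT vW] : v \notin T /\ v \in W by move: vWT'; rewrite inE => /andP [].
  have : ~~ (nbhd e t :&: W \subset nbhd e u).
    apply: contraTN (tmax u uWT) => sub; rewrite -ltnNge.
    have : v |: (nbhd e t :&: W) \subset nbhd e u :&: W.
      by rewrite subUset sub1set !inE euv vW subsetI sub subsetIr.
    by move/subset_leq_card; rewrite cardsU1 !inE (negbTE ntv).
  case/subsetPn => d; rewrite !inE => /andP [etd dW] ndu.
  have dWT' : d \in W :\: T.
    rewrite inE dW andbT; apply: contraL etd => dT.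
    by apply: indWT; rewrite // inE dW.
  have := hfree etd euv; rewrite (negbTE ntu) (negbTE ntv) e_sym (negbTE ndu) /=.
  by rewrite (negbTE (indWT' d v dWT' vWT')).
apply/indepP => u v; rewrite !inE !negb_or.
move=> /andP [/andP [_ ntu] uW] /andP [/andP [_ ntv] vW].
have [uT | uT] := boolP (u \in T); have [vT | vT] := boolP (v \in T).
- by apply: indWT; rewrite ?inE ?uT ?vT ?uW ?vW.
- by apply: cross; rewrite ?inE ?uT ?vT ?uW ?vW.
- by rewrite e_sym; apply: cross; rewrite ?inE ?uT ?vT ?uW ?vW.
- by apply: indWT'; rewrite ?inE ?uT ?vT ?uW ?vW.
Qed.

Lemma reg_on_bipartite W T :
  indep e (W :&: T) -> indep e (W :\: T) -> reg_on K e W <= 1.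
Proof.
have [k] := ubnP #|W :&: T|; elim: k W => // k IH W WT_lt indWT indWT'.
have [WT0 | [t0 t0WT]] := set_0Vmem (W :&: T).
  by rewrite (reg_on_disjoint indWT' WT0).
have [t tWT tmax] := arg_maxnP (fun u => #|nbhd e u :&: W|) t0WT.
apply: leq_trans (reg_on_del_link W t) _; rewrite geq_max; apply/andP; split.
  apply: IH.
  - by move: WT_lt; rewrite (cardsD1 t) setIDAC (_ : t \in W :&: T).
  - exact: indepS (setSI T (subD1set W t)) indWT.
  - exact: indepS (setSD T (subD1set W t)) indWT'.
by rewrite reg_on_indep // (indep_compl_max_nbhd indWT indWT' tWT tmax).
Qed.

Lemma reg_on_cover W T : indep e (W :\: T) -> 2 * reg_on K e W <= #|W :&: T| + 1.
Proof.
have [k] := ubnP #|W :&: T|; elim: k W => // k IH W WT_lt indWT'.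
have [indWT | ] := boolP (indep e (W :&: T)).
  have [WT0 | [t tWT]] := set_0Vmem (W :&: T).
    by rewrite (reg_on_disjoint indWT' WT0).
  have WT_gt0 : 0 < #|W :&: T| by apply/card_gt0P; exists t.
  have := reg_on_bipartite indWT indWT'; lia.
case/forall_inPn => t tWT /forall_inPn [t' t'WT /negPn ett'].
set L := W :\: (t |: nbhd e t).
have card_del : #|(W :\ t) :&: T|.+1 = #|W :&: T|.
  by rewrite (cardsD1 t (W :&: T)) tWT setIDAC.
have card_link : #|L :&: T| + 2 <= #|W :&: T|.
  have t't : t' != t by apply: contraTneq ett' => ->; rewrite e_irr.
  have tL : t \notin L :&: T by rewrite /L !inE eqxx.
  have t'L : t' \notin t |: (L :&: T) by rewrite /L !inE (negbTE t't) ett' orbT.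
  have : t' |: (t |: (L :&: T)) \subset W :&: T.
    by rewrite !subUset !sub1set tWT t'WT setSI ?subsetDl.
  by move/subset_leq_card; rewrite !cardsU1 tL t'L; lia.
have del_link : reg_on K e W <= maxn (reg_on K e (W :\ t)) (reg_on K e L).+1.
  exact: reg_on_del_link.
have := IH (W :\ t) ltac:(lia) (indepS (setSD T (subD1set W t)) indWT').
have := IH L ltac:(lia) (indepS (setSD T (subsetDl W _)) indWT').
lia.
Qed.

Section PrimeGraph.
Hypothesis hprime : prime_graph K e.

Lemma prime_graph_edge x : exists y, e x y.
Proof.
apply/existsP; apply: contraLR (hprime.2 x).
rewrite negb_exists -leqNgt => /forallP nx.
by rewrite /reg -setTD reg_on_isolated.
Qed.

Lemma prime_graph_reg_le_link y :
  reg K e <= (reg_on K e ([set: 'I_n] :\: (y |: nbhd e y))).+1.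
Proof.
have := reg_on_del_link [set: 'I_n] y; rewrite setTD.
by rewrite leq_max leqNgt hprime.2.
Qed.

Lemma prime_graph_twice_reg_le x : 2 * reg K e <= degree e x + 2.
Proof.
have [y exy] := prime_graph_edge x.
set L := [set: 'I_n] :\: (y |: nbhd e y).
have reg_le : reg K e <= (reg_on K e L).+1 := prime_graph_reg_le_link y.
have cover : 2 * reg_on K e L <= #|L :&: nbhd e x| + 1.
  exact: (reg_on_cover (W := L) (indep_nonnbhd_edge exy)).
have : #|L :&: nbhd e x| < degree e x.
  apply: proper_card; rewrite properE subsetIr; apply/subsetPn.
  by exists y; rewrite !inE ?exy ?eqxx.
lia.
Qed.

End PrimeGraph.
End TwoK2Free.
End Regularity.

Lemma min_degree_ge n (e : rel 'I_n) k c :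
  k <= n + c -> (forall v, k <= degree e v + c) -> k <= min_degree e + c.
Proof.
move=> kn kdeg; rewrite /min_degree.
by elim/big_ind: _ => // a b; rewrite addn_minl leq_min => -> ->.
Qed.

Theorem mainTheorem20 (K : fieldType) (n : nat) (e : rel 'I_n)
  (e_sym : symmetric e) (e_irr : irreflexive e)
  (hfree : twoK2_free e) (hprime : prime_graph K e) :
  (2 * reg K e <= min_degree e + 3)%N.
Proof.
have twice_reg_le := prime_graph_twice_reg_le e_sym e_irr hfree hprime.
apply: min_degree_ge => [|x]; last by rewrite (leq_trans (twice_reg_le x)) ?leq_add2l.
have [n0 | n_gt0] := posnP n.
  rewrite /reg reg_on_indep //; apply/indepP => u.
  by have := ltn_ord u; rewrite {2}n0.
have deg_le x : degree e x <= n by rewrite -[X in _ <= X]card_ord max_card.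
have := twice_reg_le (Ordinal n_gt0); have := deg_le (Ordinal n_gt0); lia.
Qed.
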